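(* Let $k$ be a natural number. For all $n\geq 2^{k-1}k(2k-1)$, $$B_k^e(n)-B_k^o(n)=C_k^e(n+1)-C_k^o(n+1)=\tfrac12 D_{2k}(n+1).$$
   Context: All partitions are of positive integers into positive parts unless stated otherwise. $B_k^e(n)$ (resp. $B_k^o(n)$) is the number of partitions of $n$ having at least one odd part, with largest odd part $2\ell-1$, in which every part is odd except for at most $k-1$ even parts. These even parts are pairwise distinct, lie in $[2\ell+2,\,2\ell+2k-2]$, and their number is even (resp. odd). $C_k^e(n)$ (resp. $C_k^o(n)$) is the number of pairs $(\lambda,\ell)$ with $\ell\ge1$ and $\lambda$ a partition of $n$ satisfying three conditions: - $\lambda$ contains the part $2\ell$; - the parts of $\lambda$ not exceeding $\ell$ are pairwise distinct, while parts in $(\ell,2\ell]$ are unrestricted; - the parts larger than $2\ell$ are at most $k-1$ pairwise distinct even parts in $[2\ell+2,\,2\ell+2k-2]$, and their number is even (resp. odd). Equivalently, a partition admitting several choices of $\ell$ is counted once per choice, matching the generating function $\sum_{\ell\ge1}\frac{(-q;q)_\ell(\mp q^{2\ell+2};q^2)_{k-1}}{(q^{\ell+1};q)_\ell}q^{2\ell}$ for $C^e\pm C^o$. $D_j(n)$ is the number of partitions of $n$ into non-negative parts (the part $0$ is allowed) in which the smallest part appears exactly $j$ times and no other part is repeated. The convention is $D_j(0)=1$, and the generating function is $\sum_{n\ge0}D_j(n)q^n=\sum_{m\ge0}q^{mj}(-q^{m+1};q)_\infty$, where $(a;q)_N=\prod_{i=0}^{N-1}(1-aq^i)$. *)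

From mathcomp Require Import all_boot all_order all_algebra.
Set Implicit Arguments. Unset Strict Implicit. Unset Printing Implicit Defensive.

(* A partition of n into positive parts is encoded by m : 'I_n.+1 -> 'I_n.+1,
   where m i is the multiplicity of the part i (every part is <= n and every
   multiplicity is <= n); the part 0 has multiplicity 0 and the weighted sum
   is n.  This is a bijection with the partitions of n. *)
Definition ptn (n : nat) := {ffun 'I_n.+1 -> 'I_n.+1}.

Definition is_ptn (n : nat) (m : ptn n) : bool :=
  (m ord0 == 0 :> nat) && (\sum_(i < n.+1) i * m i == n).

Definition mu (n : nat) (m : ptn n) (i : nat) : nat :=
  if i <= n then nat_of_ord (m (inord i)) else 0.

(* B_k^e (b = false) and B_k^o (b = true).  L = 2l-1 is the largest odd part;
   the even parts are distinct and lie in [2l+2, 2l+2k-2] = [L+3, L+2k-1];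
   b records the parity of the number of even parts. *)
Definition Bpred (k : nat) (b : bool) (n : nat) (m : ptn n) : bool :=
  is_ptn m &&
  [exists L : 'I_n.+1,
    [&& odd L, 0 < m L,
        [forall i : 'I_n.+1, (odd i && (0 < m i)) ==> (i <= L)],
        [forall i : 'I_n.+1, (~~ odd i && (0 < m i)) ==>
            [&& m i == 1 :> nat, L + 3 <= i & i <= L + 2 * k - 1]] &
        odd (\sum_(i < n.+1 | ~~ odd i) m i) == b]].

Definition B (k : nat) (b : bool) (n : nat) : nat :=
  #|[set m : ptn n | Bpred k b m]|.

(* C_k^e (b = false) and C_k^o (b = true): pairs (lambda, l), l >= 1. *)
Definition Cpred (k : nat) (b : bool) (n l : nat) (m : ptn n) : bool :=
  [&& is_ptn m, 0 < mu m (2 * l),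
      [forall i : 'I_n.+1, ((0 < i) && (i <= l)) ==> (m i <= 1)],
      [forall i : 'I_n.+1, ((2 * l < i) && (0 < m i)) ==>
          [&& ~~ odd i, m i == 1 :> nat, 2 * l + 2 <= i & i <= 2 * l + 2 * k - 2]] &
      odd (\sum_(i < n.+1 | 2 * l < i) m i) == b].

(* any l with 2l > n contributes nothing, so l ranges over 1..n *)
Definition C (k : nat) (b : bool) (n : nat) : nat :=
  \sum_(1 <= l < n.+1) #|[set m : ptn n | Cpred k b l m]|.

(* D_j(n): partitions of n into non-negative parts (0 allowed), encoded by
   multiplicities m : 'I_n.+1 -> 'I_(n+j).+1, such that the smallest part s
   appears exactly j times and no other part is repeated. (Meaningful for
   j >= 1; then D_j(0) = 1, the partition with j zeros.) *)
Definition dptn (n j : nat) := {ffun 'I_n.+1 -> 'I_(n + j).+1}.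

Definition Dpred (j n : nat) (m : dptn n j) : bool :=
  (\sum_(i < n.+1) i * m i == n) &&
  [exists s : 'I_n.+1,
    (m s == j :> nat) &&
    [forall i : 'I_n.+1, ((i < s) ==> (m i == 0 :> nat)) &&
                         ((s < i) ==> (m i <= 1))]].

Definition D (j n : nat) : nat := #|[set m : dptn n j | Dpred m]|.

(* B^e - B^o, C^e - C^o and D_j are all read off as coefficients of truncated
   q-series with integer coefficients.  Summing over the largest odd part
   L = 2l - 1 (resp. the marked part 2l, the smallest part s) writes each count
   as a coefficient of a product with one factor per part size, the sign
   (-1)^(number of even parts) turning the factors of the admissible even parts
   into 1 - q^i.  Modulo q^(N+1), where 1/(1 - q^i) is a truncated geometric
   series, both B^e(n) - B^o(n) and C^e(n+1) - C^o(n+1) become the coefficient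
   of q^(n+1) in C_k = sum_l q^(2l) (q^2;q^2)_(l+k-1) / (q;q)_(2l).  The series
   D_j = sum_s q^(js) (-q^(s+1);q)_oo satisfy (1 - q^j) D_j = 2 (-q;q)_oo - D_(j+1),
   and a telescoping sum gives a matching recurrence in k for C_k; together they
   show that D_(2k) - 2 C_k is a polynomial of degree at most k(2k-1), so its
   coefficient of q^(n+1) vanishes under the hypothesis on n. *)

From mathcomp Require Import all_boot all_order all_algebra.
From mathcomp Require Import ring zify.
Set Implicit Arguments. Unset Strict Implicit. Unset Printing Implicit Defensive.
Import GRing.Theory.
Local Open Scope ring_scope.

(** * Truncated power series *)

Definition eqmodX (R : comNzRingType) (N : nat) (p q : {poly R}) : Prop :=
  exists r, p = q + r * 'X^(N.+1).

Notation "p = q %[modX N ]" := (eqmodX N p q)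
  (at level 70, q at next level, format "p  =  q  %[modX  N ]").

Section TruncatedSeries.

Variable R : comNzRingType.
Implicit Types p q : {poly R}.

Lemma eqmodX_refl N p : p = p %[modX N].
Proof. by exists 0; rewrite mul0r addr0. Qed.

Lemma eqmodX_sym N p q : p = q %[modX N] -> q = p %[modX N].
Proof. by case=> r ->; exists (- r); ring. Qed.

Lemma eqmodX_trans N q p s : p = q %[modX N] -> q = s %[modX N] -> p = s %[modX N].
Proof. by case=> r -> [t ->]; exists (r + t); ring. Qed.

Lemma eqmodXD N p q p' q' :
  p = q %[modX N] -> p' = q' %[modX N] -> p + p' = q + q' %[modX N].
Proof. by case=> r -> [t ->]; exists (r + t); ring. Qed.

Lemma eqmodXB N p q p' q' :
  p = q %[modX N] -> p' = q' %[modX N] -> p - p' = q - q' %[modX N].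
Proof. by case=> r -> [t ->]; exists (r - t); ring. Qed.

Lemma eqmodXM N p q p' q' :
  p = q %[modX N] -> p' = q' %[modX N] -> p * p' = q * q' %[modX N].
Proof.
by case=> r -> [t ->]; exists (r * q' + q * t + r * t * 'X^(N.+1)); ring.
Qed.

Lemma eqmodXMl N c p q : p = q %[modX N] -> c * p = c * q %[modX N].
Proof. exact/eqmodXM/eqmodX_refl. Qed.

Lemma eqmodXMr N c p q : p = q %[modX N] -> p * c = q * c %[modX N].
Proof. by move=> h; apply: eqmodXM h (eqmodX_refl _ _). Qed.

Lemma eqmodX_Xn0 N a : (N < a)%N -> 'X^a = (0 : {poly R}) %[modX N].
Proof. by move=> h; exists 'X^(a - N.+1); rewrite add0r -exprD subnK. Qed.

Lemma eqmodX_coef N i p q : (i <= N)%N -> p = q %[modX N] -> p`_i = q`_i.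
Proof. by move=> hi [r ->]; rewrite coefD coefMXn ltnS hi addr0. Qed.

Lemma eqmodX_prod N (I : Type) (r : seq I) (P : pred I) (F1 F2 : I -> {poly R}) :
  (forall i, P i -> F1 i = F2 i %[modX N]) ->
  \prod_(i <- r | P i) F1 i = \prod_(i <- r | P i) F2 i %[modX N].
Proof.
move=> h; apply: (big_ind2 (eqmodX N)) => //; first exact: eqmodX_refl.
by move=> *; apply: eqmodXM.
Qed.

Lemma eqmodX_sum N (I : Type) (r : seq I) (P : pred I) (F1 F2 : I -> {poly R}) :
  (forall i, P i -> F1 i = F2 i %[modX N]) ->
  \sum_(i <- r | P i) F1 i = \sum_(i <- r | P i) F2 i %[modX N].
Proof.
move=> h; apply: (big_ind2 (eqmodX N)) => //; first exact: eqmodX_refl.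
by move=> *; apply: eqmodXD.
Qed.

Lemma eqmodX_prod_nat1 N m b (F : nat -> {poly R}) :
  (forall i, (N < i)%N -> F i = 1 %[modX N]) -> (N < m)%N ->
  \prod_(m <= i < b) F i = 1 %[modX N].
Proof.
move=> hF hm; apply: (@eqmodX_trans _ (\prod_(m <= i < b) 1)).
  rewrite big_nat_cond [X in _ = X %[modX _]]big_nat_cond.
  apply: eqmodX_prod => i /andP [/andP [hi _] _]; apply: hF; exact: leq_trans hm hi.
by rewrite big1 //; apply: eqmodX_refl.
Qed.

Lemma onesubXn_eqmodX N i : (N < i)%N -> 1 - 'X^i = (1 : {poly R}) %[modX N].
Proof. by move=> h; case: (eqmodX_Xn0 h) => r ->; exists (- r); ring. Qed.

Lemma oneaddXn_eqmodX N i : (N < i)%N -> 1 + 'X^i = (1 : {poly R}) %[modX N].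
Proof. by move=> h; case: (eqmodX_Xn0 h) => r ->; exists r; ring. Qed.

Definition geom (N i : nat) : {poly R} := \sum_(j < N.+1) 'X^(i * j).

Lemma geom_mul N i : (1 - 'X^i) * geom N i = 1 - 'X^(i * N.+1).
Proof.
elim: N => [|N IH]; first by rewrite /geom big_ord1 muln0 expr0 mulr1 muln1.
rewrite /geom big_ord_recr /= mulrDr -/(geom N i) IH [in RHS]mulnS exprD; ring.
Qed.

Lemma geom_inv N i : (0 < i)%N -> (1 - 'X^i) * geom N i = 1 %[modX N].
Proof. by move=> hi; rewrite geom_mul; exact/onesubXn_eqmodX/leq_pmull. Qed.

Lemma geom_eqmodX1 N i : (N < i)%N -> geom N i = 1 %[modX N].
Proof.
move=> h; apply: eqmodX_trans (geom_inv N (leq_ltn_trans (leq0n N) h)).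
rewrite -{1}[geom N i]mul1r; apply/eqmodXMr/eqmodX_sym/onesubXn_eqmodX/h.
Qed.

Lemma geom_sub1 N i : (0 < i)%N -> geom N i - 1 = 'X^i * geom N i %[modX N].
Proof.
move=> hi; case: (geom_inv N hi) => r hr; exists r.
have -> : r * 'X^(N.+1) = (1 - 'X^i) * geom N i - 1 by rewrite hr; ring.
ring.
Qed.

Lemma geomS N i : (0 < i)%N -> geom N.+1 i = geom N i %[modX N].
Proof.
move=> hi; rewrite /geom big_ord_recr /=.
have [r ->] : ('X^(i * N.+1) : {poly R}) = 0 %[modX N] by apply/eqmodX_Xn0/leq_pmull.
by exists r; rewrite add0r.
Qed.

End TruncatedSeries.

(** * Products over integer ranges *)

Section BigRanges.

Variables (R : Type) (idx : R) (op : Monoid.law idx).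

Lemma big_ord_pairs (F : nat -> R) K :
  \big[op/idx]_(i < 2 * K) F i = \big[op/idx]_(j < K) op (F (2 * j)%N) (F (2 * j).+1).
Proof.
elim: K => [|K IH]; first by rewrite muln0 !big_ord0.
by rewrite mulnS !add2n big_ord_recr /= big_ord_recr /= big_ord_recr /= IH Monoid.mulmA.
Qed.

Lemma big_ord_if_range M a b (F : nat -> R) : (b <= M)%N ->
  \big[op/idx]_(i < M) (if (a <= i < b)%N then F i else idx) = \big[op/idx]_(a <= i < b) F i.
Proof. by move=> hb; rewrite big_geq_mkord (big_ord_widen_cond _ _ _ hb) [RHS]big_mkcond. Qed.

Lemma big_ord_odd M l (F : nat -> R) : ((2 * l).+1 < M)%N ->
  \big[op/idx]_(i < M) (if odd i && (i <= (2 * l).+1)%N then F i else idx)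
  = \big[op/idx]_(j < l.+1) F (2 * j).+1.
Proof.
move=> hM; pose G i := if odd i && (i <= (2 * l).+1)%N then F i else idx.
have -> : \big[op/idx]_(i < M) G i = \big[op/idx]_(i < 2 * (M + l)) G i.
  rewrite -!(big_mkord xpredT G) (@big_cat_nat _ _ _ M 0 (2 * (M + l))) //=; last lia.
  rewrite [X in _ = op _ X]big1_seq ?Monoid.mulm1 // => i /andP [_].
  by rewrite mem_index_iota /G => /andP [hi _]; case: ifP => // /andP [_]; lia.
rewrite big_ord_pairs -(big_mkord xpredT (fun j => F (2 * j).+1)).
rewrite -(@big_ord_if_range (M + l) 0 l.+1); last lia.
apply: eq_bigr => j _; rewrite /G /= mul2n odd_double /= Monoid.mul1m -mul2n.
by congr (if _ then _ else _); apply/idP/idP; lia.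
Qed.

End BigRanges.

Lemma sum_odd_uphalf (V : nmodType) n (h : nat -> V) :
  (forall l, (n.+1 < 2 * l)%N -> h l = 0) ->
  \sum_(L < n.+1) (if odd L then h (uphalf L) else 0) = \sum_(1 <= l < n.+2) h l.
Proof.
move=> h0; pose F L := if odd L then h (uphalf L) else 0.
rewrite -/(\sum_(L < n.+1) F L) (@big_ord_widen _ _ _ n.+1 (2 * n.+1) F); last lia.
have -> : \sum_(i < 2 * n.+1 | (i < n.+1)%N) F i = \sum_(i < 2 * n.+1) F i.
  rewrite big_mkcond; apply: eq_bigr => i _; case: ltnP => // hi.
  rewrite /F; case: ifP => // oi; apply/esym/h0.
  by move: hi; rewrite uphalf_half oi -{1}(odd_double_half i) oi; lia.
rewrite big_ord_pairs big_add1 /= big_mkord; apply: eq_bigr => j _.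
by rewrite /F /= mul2n odd_double /= add0r doubleK.
Qed.

(** * q-series identities *)

Section QSeries.

Variable R : comNzRingType.

(* [poch2 m] is (q^2;q^2)_m; modulo X^(N+1), [invpoch N b] is 1/(q;q)_b and
   [distinct_gf N s] is (-q^(s+1);q)_oo.  [Cterm N k l] is the summand
   (-q;q)_l (q^(2l+2);q^2)_(k-1) q^(2l) / (q^(l+1);q)_l of the generating
   function of C^e - C^o, rewritten as q^(2l) (q^2;q^2)_(l+k-1) / (q;q)_(2l). *)
Definition poch2 (m : nat) : {poly R} := \prod_(1 <= i < m.+1) (1 - 'X^(2 * i)).

Definition invpoch (N b : nat) : {poly R} := \prod_(1 <= i < b.+1) geom R N i.

Definition distinct_gf (N s : nat) : {poly R} := \prod_(s.+1 <= i < N.+1) (1 + 'X^i).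

Definition Cterm (N k l : nat) : {poly R} :=
  'X^(2 * l) * poch2 (l + k - 1) * invpoch N (2 * l).

Definition Cgf (N k : nat) : {poly R} := \sum_(1 <= l < N.+1) Cterm N k l.

Definition Dgf (N j : nat) : {poly R} := \sum_(s < N.+1) 'X^(j * s) * distinct_gf N s.

Lemma poch2S m : poch2 m.+1 = poch2 m * (1 - 'X^(2 * m.+1)).
Proof. by rewrite /poch2 big_nat_recr. Qed.

Lemma invpochS N b : invpoch N b.+1 = invpoch N b * geom R N b.+1.
Proof. by rewrite /invpoch big_nat_recr. Qed.

Lemma poch2_invpoch N m b : (N <= m)%N -> (N <= b)%N ->
  poch2 m * invpoch N b = distinct_gf N 0 %[modX N].
Proof.
move=> hm hb.
have -> : poch2 m = \prod_(1 <= i < m.+1) ((1 - 'X^i) * (1 + 'X^i)).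
  by apply: eq_bigr => i _; rewrite mulnC exprM; ring.
rewrite /invpoch (@big_cat_nat _ _ _ N.+1) //=.
rewrite [X in _ * X](@big_cat_nat _ _ _ N.+1) //=.
have tail1 : \prod_(N.+1 <= i < m.+1) ((1 - 'X^i) * (1 + 'X^i)) = (1 : {poly R}) %[modX N].
  apply: eqmodX_prod_nat1 => // i hi; rewrite -[X in _ = X %[modX _]]mulr1.
  by apply: eqmodXM; [apply: onesubXn_eqmodX | apply: oneaddXn_eqmodX].
have tail2 : \prod_(N.+1 <= i < b.+1) geom R N i = 1 %[modX N].
  by apply: eqmodX_prod_nat1 => // i; apply: geom_eqmodX1.
apply: (@eqmodX_trans _ _ (\prod_(1 <= i < N.+1) ((1 - 'X^i) * (1 + 'X^i)) * 1
                          * (\prod_(1 <= i < N.+1) geom R N i * 1))).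
  by apply: eqmodXM; apply: eqmodXMl.
rewrite !mulr1 big_split /= mulrAC -big_split /= /distinct_gf.
rewrite -[X in _ = X %[modX _]]mul1r; apply: eqmodXMr.
apply: (@eqmodX_trans _ _ (\prod_(1 <= i < N.+1) (1 : {poly R}))); last first.
  by rewrite big1 //; apply: eqmodX_refl.
rewrite big_nat_cond [X in _ = X %[modX _]]big_nat_cond.
by apply: eqmodX_prod => i /andP [/andP [hi _] _]; apply: geom_inv.
Qed.

Lemma invpochS_eqmodX N b : invpoch N.+1 b = invpoch N b %[modX N].
Proof.
rewrite /invpoch big_nat_cond [X in _ = X %[modX _]]big_nat_cond.
by apply: eqmodX_prod => i /andP [/andP [hi _] _]; apply: geomS.
Qed.

Lemma invpoch_pairs N b :
  invpoch N (2 * b) = \prod_(j < b) (geom R N (2 * j).+1 * geom R N (2 * j).+2).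
Proof. by rewrite /invpoch big_add1 /= big_mkord (big_ord_pairs _ (fun i => geom R N i.+1)). Qed.

Lemma poch2_cat a b : (a <= b)%N ->
  poch2 b = poch2 a * \prod_(a.+1 <= j < b.+1) (1 - 'X^(2 * j)).
Proof. by move=> h; rewrite /poch2 (@big_cat_nat _ _ _ a.+1). Qed.

Lemma poch2_ord m : poch2 m = \prod_(j < m) (1 - 'X^(2 * j.+1)).
Proof. by rewrite /poch2 big_add1 /= big_mkord. Qed.

Lemma odd_geom_prod N k l : (0 < k)%N ->
  \prod_(j < l.+1) geom R N (2 * j).+1 * \prod_(l.+2 <= j < l.+1 + k) (1 - 'X^(2 * j))
    = poch2 (l + k) * invpoch N (2 * l.+1) %[modX N].
Proof.
move=> hk; rewrite (@poch2_cat l.+1 (l + k)); last lia.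
rewrite (_ : (l + k).+1 = l.+1 + k)%N // invpoch_pairs.
rewrite poch2_ord.
set E := \prod_(_ <= _ < _) _.
have -> : \prod_(j < l.+1) (1 - 'X^(2 * j.+1)) * E *
      \prod_(j < l.+1) (geom R N (2 * j).+1 * geom R N (2 * j).+2)
    = \prod_(j < l.+1) (geom R N (2 * j).+1 * ((1 - 'X^((2 * j).+2)) * geom R N (2 * j).+2)) * E.
  rewrite mulrC mulrA -big_split /=; congr (_ * _); apply: eq_bigr => j _.
  rewrite mulnS add2n; ring.
apply/eqmodXMr/eqmodX_sym/eqmodX_prod => j _.
by rewrite -[X in _ = X %[modX _]]mulr1; apply/eqmodXMl/geom_inv.
Qed.

Lemma low_geom_prod N k l : (0 < k)%N ->
  \prod_(1 <= i < l.+1) (1 + 'X^i) * \prod_(l.+1 <= i < (2 * l).+1) geom R N i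
    * \prod_(l.+1 <= j < l + k) (1 - 'X^(2 * j))
    = poch2 (l + k - 1) * invpoch N (2 * l) %[modX N].
Proof.
move=> hk; rewrite (@poch2_cat l (l + k - 1)); last lia.
have -> : ((l + k - 1).+1 = l + k)%N by lia.
rewrite /invpoch (@big_cat_nat _ _ _ l.+1 1 (2 * l).+1) //=; last by rewrite ltnS leq_pmull.
have -> : poch2 l = \prod_(1 <= i < l.+1) ((1 - 'X^i) * (1 + 'X^i)).
  by apply: eq_bigr => i _; rewrite mulnC exprM; ring.
set E := \prod_(l.+1 <= j < l + k) _; set H := \prod_(l.+1 <= i < (2 * l).+1) _.
have -> : \prod_(1 <= i < l.+1) ((1 - 'X^i) * (1 + 'X^i)) * E *
    (\prod_(1 <= i < l.+1) geom R N i * H)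
   = \prod_(1 <= i < l.+1) ((1 + 'X^i) * ((1 - 'X^i) * geom R N i)) * H * E.
  by rewrite !big_split /=; ring.
apply/eqmodXMr/eqmodXMr/eqmodX_sym.
rewrite big_nat_cond [X in _ = X %[modX _]]big_nat_cond.
apply: eqmodX_prod => i /andP [/andP [hi _] _].
by rewrite -[X in _ = X %[modX _]]mulr1; apply/eqmodXMl/geom_inv.
Qed.

Lemma coef_Cterm_high N k l i : (i < 2 * l)%N -> (Cterm N k l)`_i = 0.
Proof. by move=> h; rewrite /Cterm -mulrA mulrC coefMXn h. Qed.

Definition Cteles (N k l : nat) : {poly R} :=
  'X * poch2 (l + k - 1) * invpoch N (2 * l - 2).

Lemma Cteles1 N k : Cteles N k 1 = 'X * poch2 k.
Proof. by rewrite /Cteles /invpoch big_geq // mulr1 add1n subn1. Qed.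

Lemma CtelesN N k : Cteles N k N.+1 = 'X * distinct_gf N 0 %[modX N].
Proof. by rewrite /Cteles -mulrA; apply/eqmodXMl/poch2_invpoch; lia. Qed.

Lemma CtelesB N k l : (0 < l)%N ->
  Cteles N k l.+1 - Cteles N k l
    = Cterm N k l * (1 + 'X - 'X^(2 * l) - 'X^(2 * k + 1)) %[modX N].
Proof.
case: l => // l _; rewrite /Cteles /Cterm.
have -> : (l.+2 + k - 1 = (l + k).+1)%N by lia.
have -> : (2 * l.+2 - 2 = (2 * l).+2)%N by lia.
have -> : (l.+1 + k - 1 = l + k)%N by lia.
have -> : (2 * l.+1 - 2 = 2 * l)%N by lia.
have -> : (2 * l.+1 = (2 * l).+2)%N by lia.
rewrite poch2S !invpochS.
set Q := poch2 _; set g0 := invpoch _ _; set g1 := geom R N _; set g2 := geom R N _.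
have h1 : (1 - 'X^((2 * l).+1)) * g1 = 1 %[modX N] by apply: geom_inv.
have h2 : (1 - 'X^((2 * l).+2)) * g2 = 1 %[modX N] by apply: geom_inv.
have -> : 'X^(2 * (l + k).+1) = 'X^((2 * l).+1) * 'X^(2 * k + 1) :> {poly R}.
  by rewrite -exprD; congr ('X^_); lia.
rewrite exprSr in h2 *.
set y := 'X^((2 * l).+1); set z := 'X^(2 * k + 1).
(* the factors (1 - y) g1 and (1 - y X) g2 are 1 modulo X^(N+1) *)
apply: (@eqmodX_trans _ _ ('X * (Q * (1 - y * z)) * (g0 * g1 * g2)
   - 'X * Q * g0 * (((1 - y) * g1) * ((1 - y * 'X) * g2)))).
  apply: eqmodXB; first exact: eqmodX_refl.
  rewrite -[X in X = _ %[modX _]]mulr1; apply/eqmodXMl/eqmodX_sym.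
  by rewrite -[X in _ = X %[modX _]](mulr1 1); apply: eqmodXM.
have -> : 'X * (Q * (1 - y * z)) * (g0 * g1 * g2) -
    'X * Q * g0 * ((1 - y) * g1 * ((1 - y * 'X) * g2)) =
    y * 'X * Q * (g0 * g1 * g2) * (1 + 'X - y * 'X - z) by ring.
exact: eqmodX_refl.
Qed.

Lemma CtermS N k l : (0 < l)%N ->
  Cterm N k.+1 l = Cterm N k l * (1 - 'X^(2 * (l + k))).
Proof.
case: l => // l _; rewrite /Cterm.
have -> : (l.+1 + k.+1 - 1 = (l.+1 + k - 1).+1)%N by lia.
rewrite poch2S; have -> : ((l.+1 + k - 1).+1 = l.+1 + k)%N by lia.
ring.
Qed.

Lemma CgfS N k : let x := 'X^(2 * k) in
  Cgf N k.+1 = (1 - x) * (1 - x * 'X) * Cgf N k + x * 'X * (distinct_gf N 0 - poch2 k)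
  %[modX N].
Proof.
move=> x.
have step l : (0 < l)%N ->
    Cterm N k.+1 l - (1 - x) * (1 - x * 'X) * Cterm N k l
      = x * (Cteles N k l.+1 - Cteles N k l) %[modX N].
  move=> hl; apply: eqmodX_sym; apply: eqmodX_trans (eqmodXMl x (CtelesB N k hl)) _.
  rewrite CtermS // mulnDr exprD exprD expr1 -/x.
  set u := Cterm N k l; set v := 'X^(2 * l).
  have -> : u * (1 - v * x) - (1 - x) * (1 - x * 'X) * u
      = x * (u * (1 + 'X - v - x * 'X)) by ring.
  exact: eqmodX_refl.
have [r hr] : Cgf N k.+1 - (1 - x) * (1 - x * 'X) * Cgf N k
              = x * (Cteles N k N.+1 - Cteles N k 1) %[modX N].
  rewrite /Cgf mulr_sumr -sumrB -telescope_sumr // mulr_sumr.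
  rewrite big_nat_cond [X in _ = X %[modX _]]big_nat_cond.
  by apply: eqmodX_sum => l /andP [/andP [hl _] _]; apply: step.
have [r' hr'] := CtelesN N k.
exists (r + x * r'); rewrite mulrDl -[Cgf N k.+1](subrK ((1 - x) * (1 - x * 'X) * Cgf N k)).
rewrite hr hr' Cteles1; ring.
Qed.

Lemma distinct_gfS N s : (s < N)%N -> distinct_gf N s = (1 + 'X^(s.+1)) * distinct_gf N s.+1.
Proof. by move=> h; rewrite /distinct_gf big_ltn. Qed.

Lemma distinct_gfNN N : distinct_gf N N = 1.
Proof. by rewrite /distinct_gf big_geq. Qed.

Lemma Dgf_shift N j :
  'X^j * Dgf N j
    = (Dgf N j - distinct_gf N 0) + (Dgf N j.+1 - distinct_gf N 0) + 'X^(j * N.+1).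
Proof.
have tail i : Dgf N i - distinct_gf N 0 = \sum_(s < N) 'X^(i * s.+1) * distinct_gf N s.+1.
  by rewrite /Dgf big_ord_recl muln0 expr0 mul1r addrC addKr.
rewrite !tail /Dgf big_ord_recr /= distinct_gfNN mulr1 mulrDr mulr_sumr -big_split /=.
congr (_ + _); last by rewrite -exprD mulnS addnC.
apply: eq_bigr => s _.
rewrite distinct_gfS // mulrA -exprD -mulnS mulSn addnC exprD; ring.
Qed.

Lemma Dgf1 N : Dgf N 1 = 2%:R * distinct_gf N 0 - 1.
Proof.
have := Dgf_shift N 0; rewrite mul0n !expr0 mul1r => h.
by rewrite -[LHS]addr0 -(subrr (Dgf N 0)) {2}h; ring.
Qed.

Lemma DgfS N j : (0 < j)%N ->
  (1 - 'X^j) * Dgf N j = 2%:R * distinct_gf N 0 - Dgf N j.+1 %[modX N].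
Proof.
move=> hj; have [r hr] : ('X^(j * N.+1) : {poly R}) = 0 %[modX N].
  by apply: eqmodX_Xn0; rewrite mulnC; exact: leq_pmulr.
by exists (- r); rewrite mulrBl mul1r Dgf_shift hr; ring.
Qed.

Lemma DgfSS N j : (0 < j)%N ->
  Dgf N j.+2 = (1 - 'X^j) * (1 - 'X^j * 'X) * Dgf N j + 2%:R * ('X^j * 'X) * distinct_gf N 0
  %[modX N].
Proof.
move=> hj; have [r1 hr1] := DgfS N (ltn0Sn j); have [r2 hr2] := DgfS N hj.
rewrite exprSr in hr1.
exists (r1 - (1 - 'X^j * 'X) * r2).
have -> : Dgf N j.+2 = 2%:R * distinct_gf N 0 + r1 * 'X^(N.+1) - (1 - 'X^j * 'X) * Dgf N j.+1.
  by rewrite hr1; ring.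
have -> : Dgf N j.+1 = 2%:R * distinct_gf N 0 + r2 * 'X^(N.+1) - (1 - 'X^j) * Dgf N j.
  by rewrite hr2; ring.
ring.
Qed.

(* chosen so that [Dgf_Cgf] holds; only its degree matters *)
Fixpoint DCdefect (k : nat) : {poly R} :=
  if k is k'.+1 then
    (1 - 'X^(2 * k)) * (1 - 'X^(2 * k) * 'X) * DCdefect k'
      + 2%:R * ('X^(2 * k) * 'X) * poch2 k
  else 1 + 'X.

Lemma Dgf_Cgf N k : Dgf N (2 * k).+2 = 2%:R * Cgf N k.+1 + DCdefect k %[modX N].
Proof.
elim: k => [|k [r1 hr1]].
  have [r hr] := DgfS N (ltn0Sn 0); have [r2 hr2] := CgfS N 0.
  rewrite Dgf1 expr1 in hr; rewrite muln0 expr0 /poch2 big_geq // in hr2.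
  exists (r - 2%:R * r2).
  have -> : Dgf N 2
      = 2%:R * distinct_gf N 0 + r * 'X^(N.+1) - (1 - 'X) * (2%:R * distinct_gf N 0 - 1).
    by rewrite hr; ring.
  rewrite hr2 /=; ring.
have [r0 hr0] := DgfSS N (ltn0Sn (2 * k).+1); have [r2 hr2] := CgfS N k.+1.
have e : (2 * k).+2 = (2 * k.+1)%N by lia.
rewrite e in hr0 hr1.
exists (r0 + (1 - 'X^(2 * k.+1)) * (1 - 'X^(2 * k.+1) * 'X) * r1 - 2%:R * r2).
rewrite hr0 hr1 hr2 /=; ring.
Qed.

Lemma size_onesubXn a : (size ((1 - 'X^a)%R : {poly R}) <= a.+1)%N.
Proof.
apply: leq_trans (size_polyD _ _) _.
by rewrite size_polyN size_polyXn geq_max leqnn andbT size_poly1.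
Qed.

Lemma size_poch2 m : (size (poch2 m) <= (m * m.+1).+1)%N.
Proof.
elim: m => [|m IH]; first by rewrite /poch2 big_geq // size_poly1.
rewrite poch2S; apply: leq_trans (size_polyMleq _ _) _.
have := size_onesubXn (2 * m.+1); lia.
Qed.

Lemma size_mul_le (p q : {poly R}) m n :
  (size p <= m.+1)%N -> (size q <= n.+1)%N -> (size (p * q)%R <= (m + n).+1)%N.
Proof. by move=> hp hq; apply: leq_trans (size_polyMleq p q) _; have := leq_add hp hq; lia. Qed.

Lemma size_DCdefect k : (size (DCdefect k) <= (k.+1 * (2 * k).+1).+1)%N.
Proof.
elim: k => [|k IH] /=.
  by apply: leq_trans (size_polyD _ _) _; rewrite size_polyX size_poly1.
rewrite -exprSr; set x := 2 * k.+1.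
have s2 : (size (2%:R : {poly R}) <= 0.+1)%N by rewrite -polyC_natr size_polyC_leq1.
have sX : (size ('X^(x.+1) : {poly R}) <= x.+2)%N by rewrite size_polyXn.
have h1 := size_mul_le (size_mul_le (size_onesubXn x) (size_onesubXn x.+1)) IH.
have h2 := size_mul_le (size_mul_le s2 sX) (size_poch2 k.+1).
apply: leq_trans (size_polyD _ _) _; rewrite geq_max.
by apply/andP; split; [apply: leq_trans h1 _ | apply: leq_trans h2 _]; rewrite /x; nia.
Qed.

Lemma coef_DCdefect k i : (k.+1 * (2 * k).+1 < i)%N -> (DCdefect k)`_i = 0.
Proof. by move=> h; apply/nth_default/(leq_trans (size_DCdefect k)). Qed.

End QSeries.

(** * Weighted counts as coefficients *)

Section WeightedCounting.

Variable R : comNzRingType.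

Lemma prod_scale_Xn (I : Type) (r : seq I) (c : I -> R) (e : I -> nat) :
  \prod_(i <- r) (c i *: 'X^(e i)) = (\prod_(i <- r) c i) *: 'X^(\sum_(i <- r) e i).
Proof.
elim: r => [|x r IH]; first by rewrite !big_nil scale1r expr0.
by rewrite !big_cons IH exprD -scalerAl -scalerAr scalerA -!mul_polyC mulrA.
Qed.

Lemma weighted_count_coef (n M t : nat) (w : nat -> nat -> R) :
  \sum_(m : {ffun 'I_n -> 'I_M})
     (((\sum_(i < n) i * m i)%N == t)%:R * \prod_(i < n) w i (m i))
  = (\prod_(i < n) \sum_(j < M) (w i j *: 'X^(i * j)))`_t.
Proof.
rewrite bigA_distr_bigA /= coef_sum; apply: eq_bigr => m _.
by rewrite prod_scale_Xn coefZ coefXn mulrC eq_sym.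
Qed.

Lemma card_set_natr (T : finType) (P : pred T) :
  #|[set x | P x]|%:R = \sum_x (P x)%:R :> R.
Proof.
rewrite cardsE -sum1_card natr_sum big_mkcond /=.
by apply: eq_bigr => x _; rewrite unfold_in; case: (P x).
Qed.

Lemma prod_natr_bool (I : finType) (b : I -> bool) :
  \prod_i (b i)%:R = [forall i, b i]%:R :> R.
Proof.
have [/forallP h | /forallPn [i hi]] := boolP [forall i, b i].
  by rewrite big1 // => i _; rewrite h.
by rewrite (bigD1 i) //= (negbTE hi) mul0r.
Qed.

Lemma natr_exists_uniq (T : finType) (P : pred T) :
  (forall x y, P x -> P y -> x = y) -> [exists x, P x]%:R = \sum_x (P x)%:R :> R.
Proof.
move=> uniqP; have [x Px | noP] := pickP P; last first.
  have -> : [exists x, P x] = false by apply/existsP => -[x]; rewrite noP.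
  by rewrite big1 // => x _; rewrite noP.
rewrite (bigD1 x) //= Px big1 ?addr0 => [|y yx].
  by have -> : [exists x, P x] by apply/existsP; exists x.
by case: (boolP (P y)) => // Py; rewrite (uniqP _ _ Px Py) eqxx in yx.
Qed.

Lemma natr_andb (a b : bool) : (a && b)%:R = a%:R * b%:R :> R.
Proof. by rewrite -mulnb natrM. Qed.

Lemma sum_Xn_eq0 N i (s : R) :
  \sum_(j < N.+1) (((j == 0 :> nat)%:R * s ^+ j) *: 'X^(i * j)) = 1.
Proof.
by rewrite big_ord_recl big1 => [|j _]; rewrite /= ?mul1r ?muln0 ?scale1r ?addr0 ?mul0r ?scale0r.
Qed.

Lemma sum_Xn_le1 N i (s : R) :
  \sum_(j < N.+2) ((((j <= 1)%N)%:R * s ^+ j) *: 'X^(i * j)) = 1 + s *: 'X^i.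
Proof.
rewrite !big_ord_recl big1 => [|j _]; last by rewrite /= mul0r scale0r.
by rewrite /= muln0 muln1 expr0 expr1 !mul1r scale1r addr0.
Qed.

Lemma sum_Xn_gt0 N i :
  \sum_(j < N.+1) (((0 < j)%N)%:R *: 'X^(i * j)) = geom R N i - 1 :> {poly R}.
Proof.
rewrite /geom big_ord_recl [in RHS]big_ord_recl muln0 expr0 scale0r add0r addrAC subrr add0r.
by apply: eq_bigr => j _; rewrite scale1r.
Qed.

End WeightedCounting.

(** * The B side *)

Lemma prod_even_range N M l k : (N < M)%N ->
  \prod_(i < M) (if ~~ odd i && (2 * l.+1 <= i)%N && (i <= 2 * (l + k) - 2)%N
                 then 1 - 'X^i else 1 : {poly int})
  = \prod_(l.+1 <= j < l + k) (1 - 'X^(2 * j)) %[modX N].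
Proof.
move=> hM.
pose F i : {poly int} :=
  if ~~ odd i && (2 * l.+1 <= i)%N && (i <= 2 * (l + k) - 2)%N then 1 - 'X^i else 1.
rewrite -/(\prod_(i < M) F i).
have -> : \prod_(l.+1 <= j < l + k) (1 - 'X^(2 * j))
          = \prod_(i < 2 * (M + l + k)) F i :> {poly int}.
  rewrite big_ord_pairs.
  rewrite -(@big_ord_if_range _ _ _ (M + l + k) _ _ (fun j => 1 - 'X^(2 * j))); last lia.
  apply: eq_bigr => j _; rewrite /F /= mul2n odd_double /= mulr1 -!mul2n.
  by congr (if _ then _ else _); apply/idP/idP => /andP []; rewrite -?andbA; lia.
rewrite -!(big_mkord xpredT F) (@big_cat_nat _ _ _ M _ (2 * (M + l + k))) //=; last lia.
rewrite -[X in X = _ %[modX _]]mulr1; apply: eqmodXMl; apply/eqmodX_sym/eqmodX_prod_nat1 => // i hi.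
by rewrite /F; case: ifP => _; [apply: onesubXn_eqmodX | apply: eqmodX_refl].
Qed.

Definition Bcore (k n : nat) (m : ptn n) (L : 'I_n.+1) : bool :=
  [&& odd L, 0 < m L,
      [forall i : 'I_n.+1, (odd i && (0 < m i)) ==> (i <= L)] &
      [forall i : 'I_n.+1, (~~ odd i && (0 < m i)) ==>
          [&& m i == 1 :> nat, L + 3 <= i & i <= L + 2 * k - 1]]]%N.

Definition num_even_parts n (m : ptn n) : nat := (\sum_(i < n.+1 | ~~ odd i) m i)%N.

Lemma BpredE k b n (m : ptn n) :
  Bpred k b m = [&& is_ptn m, [exists L, Bcore k m L] & odd (num_even_parts m) == b].
Proof.
rewrite /Bpred; congr (_ && _); apply/existsP/andP => [[L /and5P [? ? ? ? ?]] | [/existsP [L]]].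
  by split=> //; apply/existsP; exists L; apply/and4P.
by move=> /and4P [? ? ? ?] ?; exists L; apply/and5P.
Qed.

Lemma Bcore_uniq k n (m : ptn n) L L' : Bcore k m L -> Bcore k m L' -> L = L'.
Proof.
move=> /and4P [oL pL maxL _] /and4P [oL' pL' maxL' _].
apply: val_inj; apply/eqP; rewrite eqn_leq.
by rewrite (implyP (forallP maxL' L)) ?(implyP (forallP maxL L')) ?oL ?pL ?oL' ?pL'.
Qed.

Definition Bmult (k L i j : nat) : bool :=
  (if i == 0 then j == 0
   else if odd i then (if i < L then true else if i == L then 0 < j else j == 0)
   else if (L + 3 <= i) && (i <= L + 2 * k - 1) then j <= 1 else j == 0)%N.

Lemma Bcore_forall k n (m : ptn n) (L : 'I_n.+1) : odd L ->
  (m ord0 == 0 :> nat) && Bcore k m L = [forall i : 'I_n.+1, Bmult k L i (m i)].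
Proof.
move=> oL; apply/andP/forallP => [[/eqP m0 /and4P [_ pL maxL evenm]] i | h].
  rewrite /Bmult; case: ifP => [/eqP i0 | i0].
    by rewrite (_ : i = ord0) ?m0 //; apply: val_inj.
  case: ifP => oi.
    case: ltnP => // hLi; case: ifP => [/eqP iL | iL].
      by rewrite (_ : i = L) //; apply: val_inj.
    have [// | pi] := posnP (m i).
    have hiL : (i <= L)%N by rewrite (implyP (forallP maxL i)) ?oi.
    by move: iL; rewrite eqn_leq hiL hLi.
  have [mi0 | pi] := posnP (m i); first by rewrite mi0; case: ifP.
  have := implyP (forallP evenm i); rewrite oi pi => /(_ isT) /and3P [/eqP -> h1 h2].
  by rewrite h1 h2.
have m0 := h ord0; rewrite /Bmult eqxx in m0; split => //.
apply/and4P; split => //.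
- have := h L; rewrite /Bmult oL ltnn eqxx.
  by case: ifP => // /eqP L0; rewrite L0 in oL.
- apply/forallP => i; apply/implyP => /andP [oi pi]; have := h i.
  rewrite /Bmult oi; case: ifP => [/eqP i0 | _]; first by rewrite i0 in oi.
  case: ltnP => [/ltnW // | hLi]; case: ifP => [/eqP -> // | _].
  by move/eqP => mi0; rewrite mi0 in pi.
- apply/forallP => i; apply/implyP => /andP [oi pi]; have := h i.
  rewrite /Bmult (negbTE oi); case: ifP => [/eqP i0 | _].
    by move/eqP => m0i; rewrite m0i in pi.
  case: ifP => [_ hm | _]; last by move/eqP => m0i; rewrite m0i in pi.
  by rewrite andbT eqn_leq hm.
Qed.

Definition Bweight (k L i j : nat) : int :=
  (Bmult k L i j)%:R * (if odd i then 1 else -1) ^+ j.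

Definition Bprod (k n L : nat) : {poly int} :=
  \prod_(i < n.+1) \sum_(j < n.+1) (Bweight k L i j *: 'X^(i * j)).

Lemma Bweight_prod k n (m : ptn n) (L : 'I_n.+1) : odd L ->
  (is_ptn m && Bcore k m L)%:R * (-1) ^+ odd (num_even_parts m)
  = (((\sum_(i < n.+1) i * m i)%N == n)%:R * \prod_(i < n.+1) Bweight k L i (m i) :> int).
Proof.
move=> oL; rewrite /Bweight big_split /= prod_natr_bool -Bcore_forall //.
have -> : \prod_(i < n.+1) (if odd i then 1 else -1) ^+ m i = (-1) ^+ num_even_parts m :> int.
  rewrite /num_even_parts -prodrXr [RHS]big_mkcond; apply: eq_bigr => i _.
  by case: (odd i); rewrite ?expr1n.
rewrite signr_odd /is_ptn -andbA !natr_andb; ring.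
Qed.

Lemma Bdiff_sum k n :
  (B k false n)%:Z - (B k true n)%:Z
  = \sum_(L : 'I_n.+1) (if odd L then (Bprod k n L)`_n else 0).
Proof.
rewrite /B -!natz !card_set_natr -sumrB.
transitivity (\sum_(m : ptn n) \sum_(L : 'I_n.+1)
                 ((is_ptn m && Bcore k m L)%:R * (-1) ^+ odd (num_even_parts m) : int)).
  apply: eq_bigr => m _; rewrite !BpredE -mulr_suml.
  under eq_bigr => L _ do rewrite natr_andb.
  rewrite -mulr_sumr -natr_exists_uniq; last exact: Bcore_uniq.
  rewrite -natr_andb.
  by case: is_ptn; case: [exists _, _]; case: odd; rewrite /= ?expr0 ?expr1; ring.
rewrite exchange_big /=; apply: eq_bigr => L _.
case: ifP => oL; last by rewrite big1 // => m _; rewrite /Bcore oL andbF mul0r.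
rewrite /Bprod -(weighted_count_coef n.+1 n.+1 n (Bweight k L)).
by apply: eq_bigr => m _; apply: Bweight_prod.
Qed.

Definition Bfactor (k n L i : nat) : {poly int} :=
  if i == 0%N then 1
  else if odd i then
    (if (i < L)%N then geom _ n i else if i == L then geom _ n L - 1 else 1)
  else if (L + 3 <= i)%N && (i <= L + 2 * k - 1)%N then 1 - 'X^i else 1.

Lemma Bfactor_sum k n L i : (i <= n)%N ->
  \sum_(j < n.+1) (Bweight k L i j *: 'X^(i * j)) = Bfactor k n L i.
Proof.
move=> hi; rewrite /Bweight /Bmult /Bfactor.
have [_ | i0] := eqVneq i 0%N; first exact: sum_Xn_eq0.
case: (odd i) => /=; last case: ifP => hr; last exact: sum_Xn_eq0.
- case: ifP => hL; first by apply: eq_bigr => j _; rewrite expr1n mulr1 scale1r.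
  have [<- | _] := eqVneq i L; last exact: sum_Xn_eq0.
  by rewrite -sum_Xn_gt0; apply: eq_bigr => j _; rewrite expr1n mulr1.
- case: n hi => [|n] hi; first by move: hr; lia.
  by rewrite sum_Xn_le1 scaleN1r.
Qed.

Lemma Bfactor_eqmodX k n L i : odd L ->
  Bfactor k n L i
    = (if (L <= i < L.+1)%N then 'X^L else 1)
      * (if odd i && (i <= L)%N then geom _ n i else 1)
      * (if ~~ odd i && (L + 3 <= i)%N && (i <= L + 2 * k - 1)%N then 1 - 'X^i else 1)
    %[modX n].
Proof.
move=> oL; have L0 : (0 < L)%N by case: (L) oL.
rewrite /Bfactor; have [-> | i0] := eqVneq i 0%N.
  by rewrite (leqNgt L 0) L0 /= addn3 !mul1r; apply: eqmodX_refl.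
have [-> | iL] := eqVneq i L.
  by rewrite oL ltnn leqnn ltnSn /= mulr1; apply: geom_sub1.
have -> : (L <= i < L.+1)%N = false by rewrite ltnS -eqn_leq eq_sym (negbTE iL).
rewrite mul1r; case: ifP => oi /=; last by rewrite mul1r; apply: eqmodX_refl.
by rewrite mulr1 ltn_neqAle iL; case: (i <= L)%N; apply: eqmodX_refl.
Qed.

Lemma Bprod_eqmodX k n l : ((2 * l).+1 <= n)%N ->
  Bprod k n (2 * l).+1
    = 'X^((2 * l).+1) * \prod_(j < l.+1) geom _ n (2 * j).+1
      * \prod_(l.+2 <= j < l.+1 + k) (1 - 'X^(2 * j)) %[modX n].
Proof.
move=> hL; set L := (2 * l).+1.
have oL : odd L by rewrite /L /= mul2n odd_double.
rewrite /Bprod (eq_bigr _ (fun i _ => Bfactor_sum k L (ltnSE (ltn_ord i)))).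
apply: eqmodX_trans (eqmodX_prod _ (fun (i : 'I_n.+1) _ => Bfactor_eqmodX k n i oL)) _.
rewrite !big_split /= (big_ord_if_range _ _ (fun=> 'X^L)) // big_nat1 big_ord_odd ?ltnS //.
have -> : (L + 3 = 2 * l.+2)%N by rewrite /L; lia.
have -> : (L + 2 * k - 1 = 2 * (l.+1 + k) - 2)%N by rewrite /L; lia.
exact/eqmodXMl/prod_even_range.
Qed.

Lemma coef_Bprod k n l : (0 < k)%N -> ((2 * l).+1 <= n)%N ->
  (Bprod k n (2 * l).+1)`_n = (Cterm int n.+1 k l.+1)`_n.+1.
Proof.
move=> hk hL; rewrite (eqmodX_coef (leqnn n) (Bprod_eqmodX k hL)) -mulrA.
rewrite (eqmodX_coef (leqnn n) (eqmodXMl _ (odd_geom_prod _ n l hk))).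
rewrite /Cterm addSn subn1 succnK mulnS add2n [in RHS]exprS -!mulrA coefXM.
rewrite -[n.+1 == 0%N]/false succnK.
by apply: (eqmodX_coef (leqnn n)); apply/eqmodXMl/eqmodXMl/eqmodX_sym/invpochS_eqmodX.
Qed.

Lemma Bdiff_Cgf k n : (0 < k)%N ->
  (B k false n)%:Z - (B k true n)%:Z = (Cgf int n.+1 k)`_n.+1.
Proof.
move=> hk; rewrite Bdiff_sum /Cgf coef_sum.
rewrite -(@sum_odd_uphalf _ n (fun l => (Cterm int n.+1 k l)`_n.+1)) => [|l hl]; last first.
  exact: coef_Cterm_high.
apply: eq_bigr => L _; case: ifP => // oL.
have eL : (L : nat) = (2 * L./2).+1 by rewrite -{1}(odd_double_half L) oL mul2n.
by rewrite uphalf_half oL [in LHS]eL coef_Bprod // -eL -ltnS.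
Qed.

(** * The C side *)

Definition Ccore (k n l : nat) (m : ptn n) : bool :=
  [&& 0 < mu m (2 * l),
      [forall i : 'I_n.+1, ((0 < i) && (i <= l)) ==> (m i <= 1)] &
      [forall i : 'I_n.+1, ((2 * l < i) && (0 < m i)) ==>
          [&& ~~ odd i, m i == 1 :> nat, 2 * l + 2 <= i & i <= 2 * l + 2 * k - 2]]]%N.

Definition num_large_parts n l (m : ptn n) : nat := (\sum_(i < n.+1 | 2 * l < i) m i)%N.

Lemma CpredE k b n l (m : ptn n) :
  Cpred k b l m = [&& is_ptn m, Ccore k l m & odd (num_large_parts l m) == b].
Proof. by rewrite /Cpred /Ccore !andbA. Qed.

Definition Cmult (k l i j : nat) : bool :=
  (if i == 0 then j == 0
   else if i <= l then j <= 1
   else if i < 2 * l then true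
   else if i == 2 * l then 0 < j
   else if ~~ odd i && (2 * l.+1 <= i) && (i <= 2 * (l + k) - 2) then j <= 1
   else j == 0)%N.

Lemma Ccore_forall k n l (m : ptn n) : (0 < l)%N -> (2 * l <= n)%N ->
  (m ord0 == 0 :> nat) && Ccore k l m = [forall i : 'I_n.+1, Cmult k l i (m i)].
Proof.
move=> l0 hl; have i2l : (inord (2 * l) : 'I_n.+1) = 2 * l :> nat by rewrite inordK.
have mu2l : mu m (2 * l) = m (inord (2 * l)) by rewrite /mu hl.
apply/andP/forallP => [[/eqP m0 /and3P [pm small large]] i | h].
  rewrite /Cmult; have [i0 | i0] := eqVneq (i : nat) 0%N.
    by rewrite (_ : i = ord0) ?m0 //; apply: val_inj.
  case: ifP => il; first by rewrite (implyP (forallP small i)) // il andbT lt0n.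
  case: ifP => // i2; have [e2 | e2] := eqVneq (i : nat) (2 * l)%N.
    by rewrite (_ : i = inord (2 * l)) -?mu2l //; apply: val_inj; rewrite /= i2l.
  have [-> | pi] := posnP (m i); first by case: ifP.
  have gi : (2 * l < i)%N by move/negbT: i2; move: e2; lia.
  have := implyP (forallP large i); rewrite gi pi => /(_ isT) /and4P [oi /eqP -> h1 h2].
  have -> : (2 * l.+1 <= i)%N by lia.
  have -> : (i <= 2 * (l + k) - 2)%N by lia.
  by rewrite oi.
have m0 := h ord0; rewrite /Cmult eqxx in m0; split => //; apply/and3P; split.
- rewrite mu2l; have := h (inord (2 * l)); rewrite /Cmult i2l ltnn eqxx.
  have -> : (2 * l == 0)%N = false by lia.
  by have -> : (2 * l <= l)%N = false by lia.
- apply/forallP => i; apply/implyP => /andP [pi il]; have := h i.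
  by rewrite /Cmult il; case: eqP => // i0; rewrite i0 in pi.
- apply/forallP => i; apply/implyP => /andP [gi pi]; have := h i; rewrite /Cmult.
  have -> : (i == 0 :> nat) = false by lia.
  have -> : (i <= l)%N = false by lia.
  have -> : (i < 2 * l)%N = false by lia.
  have -> : (i == 2 * l :> nat) = false by lia.
  case: ifP => [/andP [/andP [oi h1] h2] hm | _]; last by move/eqP => m0i; rewrite m0i in pi.
  have -> : m i = 1 :> nat by apply/eqP; rewrite eqn_leq hm pi.
  by rewrite oi eqxx /=; apply/andP; split; lia.
Qed.

Definition Cweight (k l i j : nat) : int :=
  (Cmult k l i j)%:R * (if (2 * l < i)%N then -1 else 1) ^+ j.

Definition Cprod (k n l : nat) : {poly int} :=
  \prod_(i < n.+1) \sum_(j < n.+1) (Cweight k l i j *: 'X^(i * j)).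

Lemma Cweight_prod k n l (m : ptn n) : (0 < l)%N -> (2 * l <= n)%N ->
  (is_ptn m && Ccore k l m)%:R * (-1) ^+ odd (num_large_parts l m)
  = (((\sum_(i < n.+1) i * m i)%N == n)%:R * \prod_(i < n.+1) Cweight k l i (m i) :> int).
Proof.
move=> l0 hl; rewrite /Cweight big_split /= prod_natr_bool -Ccore_forall //.
have -> : \prod_(i < n.+1) (if (2 * l < i)%N then -1 else 1) ^+ m i
          = (-1) ^+ num_large_parts l m :> int.
  rewrite /num_large_parts -prodrXr [RHS]big_mkcond; apply: eq_bigr => i _.
  by case: ifP; rewrite ?expr1n.
rewrite signr_odd /is_ptn -andbA !natr_andb; ring.
Qed.

Lemma Cdiff_l k n l : (0 < l)%N ->
  #|[set m : ptn n | Cpred k false l m]|%:Z - #|[set m : ptn n | Cpred k true l m]|%:Z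
  = if (2 * l <= n)%N then (Cprod k n l)`_n else 0.
Proof.
move=> l0; rewrite -!natz !card_set_natr -sumrB.
transitivity (\sum_(m : ptn n) ((is_ptn m && Ccore k l m)%:R
                                * (-1) ^+ odd (num_large_parts l m) : int)).
  apply: eq_bigr => m _; rewrite !CpredE.
  by case: is_ptn; case: Ccore; case: odd; rewrite /= ?expr0 ?expr1; ring.
case: ifP => hl; last first.
  by apply: big1 => m _; rewrite /Ccore /mu hl andbF mul0r.
rewrite /Cprod -(weighted_count_coef n.+1 n.+1 n (Cweight k l)).
by apply: eq_bigr => m _; apply: Cweight_prod.
Qed.

Definition Cfactor (k n l i : nat) : {poly int} :=
  if i == 0%N then 1
  else if (i <= l)%N then 1 + 'X^i
  else if (i < 2 * l)%N then geom _ n i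
  else if i == (2 * l)%N then geom _ n (2 * l) - 1
  else if ~~ odd i && (2 * l.+1 <= i)%N && (i <= 2 * (l + k) - 2)%N then 1 - 'X^i
  else 1.

Lemma Cfactor_sum k n l i : (0 < l)%N -> (i <= n)%N ->
  \sum_(j < n.+1) (Cweight k l i j *: 'X^(i * j)) = Cfactor k n l i.
Proof.
move=> l0 hi; rewrite /Cweight /Cmult /Cfactor.
have [_ | i0] := eqVneq i 0%N; first exact: sum_Xn_eq0.
have [il | li] := leqP i l.
  rewrite (_ : (2 * l < i)%N = false); last lia.
  by case: n hi => [|n] hi; [lia | rewrite sum_Xn_le1 scale1r].
have [i2 | i2] := ltnP i (2 * l).
  rewrite (_ : (2 * l < i)%N = false); last lia.
  by apply: eq_bigr => j _; rewrite expr1n mulr1 scale1r.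
have [<- | e2] := eqVneq (2 * l)%N i.
  by rewrite ltnn -sum_Xn_gt0; apply: eq_bigr => j _; rewrite expr1n mulr1.
rewrite (_ : (2 * l < i)%N); last by rewrite ltn_neqAle e2.
case: ifP => hr; last exact: sum_Xn_eq0.
by case: n hi => [|n] hi; [lia | rewrite sum_Xn_le1 scaleN1r].
Qed.

Lemma Cfactor_eqmodX k n l i : (0 < l)%N ->
  Cfactor k n l i
    = (if (2 * l <= i < (2 * l).+1)%N then 'X^(2 * l) else 1)
      * (if (1 <= i < l.+1)%N then 1 + 'X^i else 1)
      * (if (l.+1 <= i < (2 * l).+1)%N then geom _ n i else 1)
      * (if ~~ odd i && (2 * l.+1 <= i)%N && (i <= 2 * (l + k) - 2)%N then 1 - 'X^i else 1)
    %[modX n].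
Proof.
move=> l0; rewrite /Cfactor.
have [-> | i0] := eqVneq i 0%N.
  have [-> -> -> ->] : [/\ (2 * l <= 0)%N = false, (1 <= 0)%N = false,
                          (l.+1 <= 0)%N = false & (2 * l.+1 <= 0)%N = false] by split; lia.
  by rewrite /= ?andbF ?mul1r; apply: eqmodX_refl.
have [il | li] := leqP i l.
  have [-> -> ->] : [/\ (2 * l <= i)%N = false, (1 <= i < l.+1)%N
                      & (2 * l.+1 <= i)%N = false] by split; lia.
  by rewrite /= ?andbF ?mul1r ?mulr1; apply: eqmodX_refl.
have [i2 | i2] := ltnP i (2 * l).
  have [-> -> ->] : [/\ (i < l.+1)%N = false, (i < (2 * l).+1)%N
                      & (2 * l.+1 <= i)%N = false] by split; lia.
  by rewrite /= ?andbF ?mul1r ?mulr1; apply: eqmodX_refl.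
have [<- | e2] := eqVneq (2 * l)%N i.
  have [-> ->] : (2 * l < l.+1)%N = false /\ (2 * l.+1 <= 2 * l)%N = false by split; lia.
  rewrite ?leqnn ?ltnSn /= ?andbF ?mulr1; apply: geom_sub1; lia.
have [-> ->] : (i < (2 * l).+1)%N = false /\ (i < l.+1)%N = false by split; lia.
by rewrite ?andbF ?mul1r; apply: eqmodX_refl.
Qed.

Lemma Cprod_eqmodX k n l : (0 < l)%N -> (2 * l <= n)%N ->
  Cprod k n l
    = 'X^(2 * l) * (\prod_(1 <= i < l.+1) (1 + 'X^i) * \prod_(l.+1 <= i < (2 * l).+1) geom _ n i
                   * \prod_(l.+1 <= j < l + k) (1 - 'X^(2 * j))) %[modX n].
Proof.
move=> l0 hl.
rewrite /Cprod (eq_bigr _ (fun i _ => Cfactor_sum k l0 (ltnSE (ltn_ord i)))).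
apply: eqmodX_trans (eqmodX_prod _ (fun (i : 'I_n.+1) _ => Cfactor_eqmodX k n i l0)) _.
rewrite !big_split /= (big_ord_if_range _ _ (fun=> 'X^(2 * l))) // big_nat1 -!mulrA.
rewrite (big_ord_if_range _ _ (fun i => 1 + 'X^i)); last lia.
rewrite (big_ord_if_range _ _ (fun i => geom _ n i)) //.
by apply/eqmodXMl/eqmodXMl/eqmodXMl/prod_even_range.
Qed.

Lemma coef_Cprod k n l : (0 < k)%N -> (0 < l)%N -> (2 * l <= n)%N ->
  (Cprod k n l)`_n = (Cterm int n k l)`_n.
Proof.
move=> hk l0 hl; rewrite (eqmodX_coef (leqnn n) (Cprod_eqmodX k l0 hl)).
by rewrite (eqmodX_coef (leqnn n) (eqmodXMl _ (low_geom_prod _ n l hk))) /Cterm mulrA.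
Qed.

Lemma Cdiff_Cgf k n : (0 < k)%N ->
  (C k false n)%:Z - (C k true n)%:Z = (Cgf int n k)`_n.
Proof.
move=> hk; rewrite /C /Cgf coef_sum -!natz !natr_sum -sumrB.
apply: eq_big_nat => l /andP [l0 _]; rewrite !natz Cdiff_l //.
by case: ifP => hl; [apply: coef_Cprod | rewrite coef_Cterm_high //; lia].
Qed.

(** * The D side *)

Definition Dcore (n j : nat) (m : dptn n j) (s : 'I_n.+1) : bool :=
  (m s == j :> nat) &&
  [forall i : 'I_n.+1, ((i < s)%N ==> (m i == 0 :> nat)) && ((s < i)%N ==> (m i <= 1)%N)].

Lemma Dcore_uniq n j (m : dptn n j) s s' : (0 < j)%N -> Dcore m s -> Dcore m s' -> s = s'.
Proof.
move=> j0 /andP [/eqP ms /forallP h] /andP [/eqP ms' /forallP h'].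
apply: val_inj; apply/eqP; case: (ltngtP s s') => // hss.
  by have := h' s; rewrite hss ms => /andP [/eqP j00 _]; move: j0; rewrite j00.
by have := h s'; rewrite hss ms' => /andP [/eqP j00 _]; move: j0; rewrite j00.
Qed.

Definition Dmult (j s i jj : nat) : bool :=
  (if i < s then jj == 0 else if i == s then jj == j else jj <= 1)%N.

Lemma Dcore_forall n j (m : dptn n j) s :
  Dcore m s = [forall i : 'I_n.+1, Dmult j s i (m i)].
Proof.
apply/andP/forallP => [[/eqP ms /forallP h] i | h]; rewrite /Dmult.
  have /andP [/implyP lt /implyP gt] := h i.
  by case: ltngtP => [/lt | /gt | /val_inj ->] //; rewrite ms.
split; first by have := h s; rewrite /Dmult ltnn eqxx.
apply/forallP => i; have := h i; rewrite /Dmult.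
by case: ltngtP => //= _ ->.
Qed.

Definition Dprod (j n s : nat) : {poly int} :=
  \prod_(i < n.+1) \sum_(jj < (n + j).+1) ((Dmult j s i jj)%:R *: 'X^(i * jj)).

Lemma Dfactor_sum n j s i : (0 < j)%N -> (i <= n)%N ->
  \sum_(jj < (n + j).+1) ((Dmult j s i jj)%:R *: 'X^(i * jj))
    = (if (s <= i < s.+1)%N then 'X^(j * s) else 1)
      * (if (s.+1 <= i < n.+1)%N then 1 + 'X^i else 1) :> {poly int}.
Proof.
move=> j0 hi; rewrite /Dmult (_ : (i < n.+1)%N) ?andbT ?ltnS //.
case: ltngtP => [_ | _ | <-] /=; rewrite ?andbF ?mulr1 ?mul1r.
- by rewrite -(sum_Xn_eq0 (n + j) i 1); apply: eq_bigr => jj _; rewrite expr1n mulr1.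
- have := sum_Xn_le1 (n + j.-1) i (1 : int); rewrite scale1r => <-.
  rewrite (_ : (n + j).+1 = (n + j.-1).+2); last lia.
  by apply: eq_bigr => jj _; rewrite expr1n mulr1.
- have jn : (j < (n + j).+1)%N by rewrite ltnS leq_addl.
  rewrite (bigD1 (Ordinal jn)) //= eqxx scale1r mulnC big1 ?addr0 // => jj.
  by rewrite -val_eqE /= => /negbTE ->; rewrite scale0r.
Qed.

Lemma Dprod_eq j n s : (0 < j)%N -> (s <= n)%N ->
  Dprod j n s = 'X^(j * s) * distinct_gf int n s.
Proof.
move=> j0 hs.
rewrite /Dprod (eq_bigr _ (fun (i : 'I_n.+1) _ => Dfactor_sum s j0 (ltnSE (ltn_ord i)))).
rewrite big_split /= (big_ord_if_range _ _ (fun=> 'X^(j * s))) // big_nat1.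
by rewrite (big_ord_if_range _ _ (fun i => 1 + 'X^i)).
Qed.

Lemma coef_Dgf n j : (0 < j)%N -> (D j n)%:Z = (Dgf int n j)`_n.
Proof.
move=> j0; rewrite /D -natz card_set_natr /Dgf coef_sum.
transitivity (\sum_(m : dptn n j) \sum_(s : 'I_n.+1)
   ((((\sum_(i < n.+1) i * m i)%N == n) && Dcore m s)%:R : int)).
  apply: eq_bigr => m _; rewrite [Dpred m]/Dpred -/(Dcore m _) natr_andb.
  under [RHS]eq_bigr do rewrite natr_andb.
  by rewrite -mulr_sumr -natr_exists_uniq // => s s'; apply: Dcore_uniq.
rewrite exchange_big /=; apply: eq_bigr => s _.
rewrite -(Dprod_eq j0 (ltnSE (ltn_ord s))) /Dprod.
rewrite -(weighted_count_coef n.+1 (n + j).+1 n (fun i jj => (Dmult j s i jj)%:R)).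
by apply: eq_bigr => m _; rewrite prod_natr_bool -Dcore_forall natr_andb.
Qed.

Unset Implicit Arguments.

Theorem theorem3 (k n : nat) :
  (1 <= k)%N -> (2 ^ (k - 1) * k * (2 * k - 1) <= n)%N ->
  (B k false n)%:Z - (B k true n)%:Z
    = (C k false n.+1)%:Z - (C k true n.+1)%:Z /\
  2 * ((C k false n.+1)%:Z - (C k true n.+1)%:Z) = (D (2 * k) n.+1)%:Z.
Proof.
move=> k1 hn; rewrite Bdiff_Cgf // Cdiff_Cgf //; split => //.
case: k k1 hn => // k _ hn.
have defect0 : (k.+1 * (2 * k).+1 < n.+1)%N.
  rewrite ltnS; apply: leq_trans hn.
  rewrite subn1 /= (_ : 2 * k.+1 - 1 = (2 * k).+1)%N; last lia.
  by rewrite -mulnA leq_pmull ?expn_gt0.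
rewrite coef_Dgf ?muln_gt0 // (_ : 2 * k.+1 = (2 * k).+2)%N; last lia.
rewrite (eqmodX_coef (leqnn _) (Dgf_Cgf _ _ _)) coefD coef_DCdefect // addr0.
by rewrite -polyC_natr coefCM.
Qed.
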